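(* For $r\in\{1,\dots,n\}$ let $f_r=[\psi_1,\psi_1^*]\cdots[\psi_r,\psi_r^*]\in\mathrm{Cl}_q(n,k)$, where $[A,B]=AB-BA$. Let $\phi_a$ denote either $\psi_a$ or $\psi_a^*$. Then: (i) if $a>r$, then $\phi_a f_r=f_r\phi_a$ and $\omega_a f_r = f_r\omega_a$; (ii) if $a\le r$, then $\phi_a f_r=-f_r\phi_a$; (iii) for any $r,s\le n$, $f_rf_s=f_sf_r$ and $f_r^2=1$.
   Context: Let $\mathbb{k}$ be a field of characteristic different from $2$, let $q\in\mathbb{k}^\times$, and let $n,k$ be positive integers. The quantum Clifford algebra $\mathrm{Cl}_q(n,k)$ is the unital associative $\mathbb{k}$-algebra generated by $\psi_a,\psi_a^*,\omega_a,\omega_a^{-1}$ for $a\in\{1,\dots,n\}$, subject to the relations (for all $a,b\in\{1,\dots,n\}$): $\omega_a\omega_b=\omega_b\omega_a$; $\omega_a\omega_a^{-1}=1$; $\omega_a\psi_b=q^{\delta_{ab}}\psi_b\omega_a$; $\omega_a\psi_b^*=q^{-\delta_{ab}}\psi_b^*\omega_a$; $\psi_a\psi_b+\psi_b\psi_a=0$; $\psi_a^*\psi_b^*+\psi_b^*\psi_a^*=0$; $\psi_a\psi_a^*+q^k\psi_a^*\psi_a=\omega_a^{-k}$; $\psi_a\psi_a^*+q^{-k}\psi_a^*\psi_a=\omega_a^{k}$; and $\psi_a\psi_b^*+\psi_b^*\psi_a=0$ if $a\neq b$. *)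

From HB Require Import structures.
From mathcomp Require Import all_boot all_order all_algebra.
Set Implicit Arguments. Unset Strict Implicit. Unset Printing Implicit Defensive.
Import GRing.Theory.
Local Open Scope ring_scope.

(* Generators of Cl_q(n,k) indexed by 'I_n (index a : 'I_n stands for a+1). *)
(* [Clq_rels q kk psi psis om omi] : the elements psi a, psis a (= psi_a^* ),
   om a (= omega_a), omi a (= omega_a^{-1}) of the K-algebra A satisfy all the
   defining relations of Cl_q(n,kk). *)
Definition Clq_rels (K : fieldType) (A : algType K) (n : nat) (q : K) (kk : nat)
  (psi psis om omi : 'I_n -> A) : Prop :=
  (forall a b, om a * om b = om b * om a) /\
      (forall a, om a * omi a = 1) /\
      (forall a b, om a * psi b = (if a == b then q else 1) *: (psi b * om a)) /\
      (forall a b, om a * psis b = (if a == b then q^-1 else 1) *: (psis b * om a)) /\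
      (forall a b, psi a * psi b + psi b * psi a = 0) /\
      (forall a b, psis a * psis b + psis b * psis a = 0) /\
      (forall a, psi a * psis a + q ^+ kk *: (psis a * psi a) = omi a ^+ kk) /\
      (forall a, psi a * psis a + q ^- kk *: (psis a * psi a) = om a ^+ kk) /\
      (forall a b, a != b -> psi a * psis b + psis b * psi a = 0).

Definition commr (R : ringType) (x y : R) := x * y - y * x.

Definition fr (R : ringType) (n : nat) (psi psis : 'I_n -> R) (r : nat) : R :=
  \prod_(i < n | (i < r)%N) commr (psi i) (psis i).

(* Write c_i = [psi_i, psi_i^*], so that f_r = c_1 ... c_r.  For a <> i, phi_a
   anticommutes with psi_i and psi_i^*, hence commutes with c_i, and omega_a
   commutes with both, hence with c_i; since phi_a^2 = 0 (char <> 2), phi_a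
   anticommutes with c_a.  So phi_a commutes with f_r when a > r and picks up
   exactly one sign when a <= r.  The c_i commute pairwise and c_i^2 = 1: with
   x = psi_i psi_i^* and y = psi_i^* psi_i one has xy = yx = 0, so
   c_i^2 = (x + q^-k y)(x + q^k y) = omega_i^k omega_i^-k = 1. *)

From HB Require Import structures.
From mathcomp Require Import all_boot all_order all_algebra.
Import GRing.Theory.
Set Implicit Arguments.
Unset Strict Implicit.
Unset Printing Implicit Defensive.

Local Open Scope ring_scope.

Section RingFacts.
Variable R : nzRingType.
Implicit Types x y z : R.

Definition anticomm x y := x * y = - (y * x).

Lemma anticomm_addr_eq0 x y : x * y + y * x = 0 -> anticomm x y.
Proof. by move/eqP; rewrite addr_eq0 => /eqP. Qed.

Lemma comm_mul_anticomm z x y :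
  anticomm z x -> anticomm z y -> GRing.comm z (x * y).
Proof.
by move=> zx zy; rewrite /GRing.comm mulrA zx mulNr -(mulrA x z) zy mulrN opprK mulrA.
Qed.

Lemma comm_commr z x y :
  GRing.comm z x -> GRing.comm z y -> GRing.comm z (commr x y).
Proof. by move=> zx zy; apply: commrB; apply: commrM. Qed.

Lemma comm_commr_anticomm z x y :
  anticomm z x -> anticomm z y -> GRing.comm z (commr x y).
Proof. by move=> zx zy; apply: commrB; apply: comm_mul_anticomm. Qed.

Lemma anticomm_commr_nil_l z y : z * z = 0 -> anticomm z (commr z y).
Proof.
move=> zz; rewrite /anticomm /commr mulrBr mulrBl !mulrA zz mul0r sub0r.
by rewrite -(mulrA y) zz mulr0 subr0.
Qed.

Lemma anticomm_commr_nil_r z y : z * z = 0 -> anticomm z (commr y z).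
Proof.
move=> zz; rewrite /anticomm /commr mulrBr mulrBl !mulrA zz mul0r subr0.
by rewrite -(mulrA y) zz mulr0 sub0r opprK.
Qed.

Lemma expr_mul_rinv x y m : x * y = 1 -> x ^+ m * y ^+ m = 1.
Proof.
move=> xy; elim: m => [|m IHm]; first by rewrite !expr0 mulr1.
by rewrite exprSr exprS mulrA -(mulrA _ x) xy mulr1.
Qed.

Lemma comm_prod_sign (I : Type) (s : seq I) (P : pred I) (F : I -> R)
    (e : pred I) z :
  (forall i, P i -> z * F i = (-1) ^+ e i * (F i * z)) ->
  z * \prod_(i <- s | P i) F i
    = (-1) ^+ count (predI P e) s * ((\prod_(i <- s | P i) F i) * z).
Proof.
move=> zF; elim: s => [|a s IHs]; first by rewrite big_nil /= mulr1 !mul1r.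
rewrite big_cons /=; case Pa: (P a) => /=; last by rewrite add0n.
set Q := \prod_(j <- s | P j) F j.
rewrite mulrA zF // -(mulrA _ (F a * z)) -(mulrA (F a) z) IHs.
rewrite (mulrA (F a)) (commr_sign (F a)) -(mulrA _ (F a)) mulrA -exprD.
by rewrite (mulrA (F a) Q z).
Qed.

Lemma anticomm_prod_single (I : eqType) (s : seq I) (P : pred I) (F : I -> R)
    a z :
  count_mem a s = 1%N -> P a -> anticomm z (F a) ->
  (forall i, P i -> i != a -> GRing.comm z (F i)) ->
  anticomm z (\prod_(i <- s | P i) F i).
Proof.
move=> a_once Pa zFa zF; rewrite /anticomm (@comm_prod_sign _ _ _ _ (pred1 a)).
  rewrite (@eq_count _ _ (pred1 a)) ?a_once ?expr1 ?mulN1r // => i /=.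
  by case: eqP => [->|]; rewrite ?Pa ?andbF.
move=> i Pi /=; have [->|ia] := eqVneq i a; first by rewrite expr1 mulN1r.
by rewrite expr0 mul1r zF.
Qed.

Lemma prod_involutions_sqr (I : Type) (s : seq I) (P : pred I) (F : I -> R) :
  (forall i j, GRing.comm (F i) (F j)) -> (forall i, F i ^+ 2 = 1) ->
  (\prod_(i <- s | P i) F i) ^+ 2 = 1.
Proof.
move=> Fcomm Fsqr; elim: s => [|a s IHs]; first by rewrite big_nil expr1n.
rewrite big_cons; case: (P a) => //.
by rewrite exprMn_comm ?Fsqr ?IHs ?mulr1 //; apply: commr_prod.
Qed.

End RingFacts.

Section AlgebraFacts.
Variables (K : fieldType) (A : algType K).
Implicit Types x y : A.

Lemma anticomm_self_mul0 x : (2%:R : K) != 0 -> anticomm x x -> x * x = 0.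
Proof.
move=> two_neq0 /eqP; rewrite -addr_eq0 -mulr2n -scaler_nat scaler_eq0.
by rewrite (negbTE two_neq0) => /eqP.
Qed.

Lemma sqrrB_orthogonal (a : K) x y : a != 0 -> x * y = 0 -> y * x = 0 ->
  (x - y) ^+ 2 = (x + a *: y) * (x + a^-1 *: y).
Proof.
move=> a_neq0 xy yx; rewrite expr2 mulrBr !mulrBl mulrDr !mulrDl xy yx.
rewrite -!scalerAl -!scalerAr xy yx scalerA mulfV // scale1r !scaler0.
by rewrite subr0 sub0r opprK addr0 add0r.
Qed.

End AlgebraFacts.

Section CliffordGenerators.
Variables (K : fieldType) (A : algType K) (n kk : nat) (q : K).
Variables psi psis om omi : 'I_n -> A.
Local Notation c i := (commr (psi i) (psis i)).
Local Notation f := (fr psi psis).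

Lemma fr_comm_above (r : nat) (a : 'I_n) (z : A) :
  (r <= a)%N -> (forall b, a != b -> GRing.comm z (c b)) -> GRing.comm z (f r).
Proof.
move=> ra zc; apply: commr_prod => i ir; apply: zc.
by apply: contraTneq ir => <-; rewrite -leqNgt.
Qed.

Lemma fr_anticomm_below (r : nat) (a : 'I_n) (z : A) :
  (a < r)%N -> anticomm z (c a) -> (forall b, a != b -> GRing.comm z (c b)) ->
  anticomm z (f r).
Proof.
move=> ar zca zc; apply: (anticomm_prod_single (a := a)) => // [|i _ ia].
  by rewrite count_uniq_mem ?index_enum_uniq ?mem_index_enum.
by apply: zc; rewrite eq_sym.
Qed.

Hypotheses (two_neq0 : (2%:R : K) != 0) (q_neq0 : q != 0).
Hypothesis rels : Clq_rels q kk psi psis om omi.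

Lemma psi_anticomm a b : anticomm (psi a) (psi b).
Proof. by apply: anticomm_addr_eq0; case: rels => _ [_ [_ [_ []]]]. Qed.

Lemma psis_anticomm a b : anticomm (psis a) (psis b).
Proof. by apply: anticomm_addr_eq0; case: rels => _ [_ [_ [_ [_ []]]]]. Qed.

Lemma psi_psis_anticomm a b : a != b -> anticomm (psi a) (psis b).
Proof.
by move=> ab; apply: anticomm_addr_eq0; case: rels => _ [_ [_ [_ [_ [_ [_ [_]]]]]]] ->.
Qed.

Lemma psis_psi_anticomm a b : a != b -> anticomm (psis a) (psi b).
Proof.
move=> ab; apply: anticomm_addr_eq0; rewrite addrC.
by case: rels => _ [_ [_ [_ [_ [_ [_ [_]]]]]]] ->; rewrite // eq_sym.
Qed.

Lemma om_comm_psi a b : a != b -> GRing.comm (om a) (psi b).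
Proof.
move=> ab; rewrite /GRing.comm; case: rels => _ [_ [-> _]].
by rewrite (negbTE ab) scale1r.
Qed.

Lemma om_comm_psis a b : a != b -> GRing.comm (om a) (psis b).
Proof.
move=> ab; rewrite /GRing.comm; case: rels => _ [_ [_ [-> _]]].
by rewrite (negbTE ab) scale1r.
Qed.

Lemma psi_comm_c a b : a != b -> GRing.comm (psi a) (c b).
Proof.
move=> ab; apply: comm_commr_anticomm.
  exact: psi_anticomm.
exact: psi_psis_anticomm.
Qed.

Lemma psis_comm_c a b : a != b -> GRing.comm (psis a) (c b).
Proof.
move=> ab; apply: comm_commr_anticomm.
  exact: psis_psi_anticomm.
exact: psis_anticomm.
Qed.

Lemma om_comm_c a b : a != b -> GRing.comm (om a) (c b).
Proof. by move=> ab; apply: comm_commr; [apply: om_comm_psi | apply: om_comm_psis]. Qed.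

Lemma c_comm a b : GRing.comm (c a) (c b).
Proof.
have [->|ab] := eqVneq a b; first exact: commr_refl.
apply/commr_sym/comm_commr; apply/commr_sym.
  exact: psi_comm_c.
exact: psis_comm_c.
Qed.

Lemma psi_sqr a : psi a * psi a = 0.
Proof. exact/anticomm_self_mul0/psi_anticomm. Qed.

Lemma psis_sqr a : psis a * psis a = 0.
Proof. exact/anticomm_self_mul0/psis_anticomm. Qed.

Lemma c_sqr a : c a ^+ 2 = 1.
Proof.
case: rels => _ [om_omi [_ [_ [_ [_ [qk_rel [qNk_rel _]]]]]]].
rewrite /commr (@sqrrB_orthogonal _ _ (q ^- kk)) ?invr_eq0 ?expf_neq0 //.
- by rewrite invrK qk_rel qNk_rel (expr_mul_rinv _ (om_omi a)).
- by rewrite -mulrA (mulrA (psis a)) psis_sqr mul0r mulr0.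
- by rewrite -mulrA (mulrA (psi a)) psi_sqr mul0r mulr0.
Qed.

Lemma fr_comm r s : GRing.comm (f r) (f s).
Proof.
by apply: commr_prod => j _; apply/commr_sym/commr_prod => i _; apply: c_comm.
Qed.

Lemma fr_sqr r : f r ^+ 2 = 1.
Proof. exact: prod_involutions_sqr c_comm c_sqr. Qed.

End CliffordGenerators.

Theorem proposition3p9 (K : fieldType) (hK2 : (2%:R : K) != 0) (q : K) (hq : q != 0)
  (n kk : nat) (hkk : (0 < kk)%N) (A : algType K) (psi psis om omi : 'I_n -> A) :
  Clq_rels q kk psi psis om omi ->
  (* (i) a > r  (1-based), i.e. r <= a (0-based index a) *)
  (forall (r : nat) (a : 'I_n), (1 <= r <= n)%N -> (r <= a)%N ->
     [/\ psi a * fr psi psis r = fr psi psis r * psi a,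
         psis a * fr psi psis r = fr psi psis r * psis a
       & om a * fr psi psis r = fr psi psis r * om a]) /\
  (* (ii) a <= r (1-based), i.e. a < r (0-based index a) *)
  (forall (r : nat) (a : 'I_n), (1 <= r <= n)%N -> (a < r)%N ->
     psi a * fr psi psis r = - (fr psi psis r * psi a) /\
     psis a * fr psi psis r = - (fr psi psis r * psis a)) /\
  (* (iii) *)
  (forall r s : nat, (1 <= r <= n)%N -> (1 <= s <= n)%N ->
     fr psi psis r * fr psi psis s = fr psi psis s * fr psi psis r /\
     fr psi psis r ^+ 2 = 1).
Proof.
move=> rels; split; [|split].
- move=> r a _ ra; split; apply: (fr_comm_above ra) => b.
  + exact: (psi_comm_c rels).
  + exact: (psis_comm_c rels).
  + exact: (om_comm_c rels).
- move=> r a _ ar; split; apply: (fr_anticomm_below ar) => [|b].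
  + exact/anticomm_commr_nil_l/(psi_sqr hK2 rels).
  + exact: (psi_comm_c rels).
  + exact/anticomm_commr_nil_r/(psis_sqr hK2 rels).
  + exact: (psis_comm_c rels).
- by move=> r s _ _; split; [exact: (fr_comm rels r s) | exact: (fr_sqr hK2 hq rels r)].
Qed.
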